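(* Let $k,l\geq 1$ be integers, $n=2^k$ and $m=2^l$. For the Ducci map $D:\mathbb{Z}_m^n\to\mathbb{Z}_m^n$, we have $L_m(n)=(l+1)2^{k-1}$ and $P_m(n)=1$.
   Context: For integers $m\ge 2$, $n\ge 2$, the Ducci function $D:\mathbb{Z}_m^n\to\mathbb{Z}_m^n$ is $D(x_1,\dots,x_n)=(x_1+x_2 \bmod m, x_2+x_3\bmod m,\dots,x_n+x_1\bmod m)$. For $\mathbf{u}\in\mathbb{Z}_m^n$, $Len(\mathbf{u})$ is the smallest integer $\alpha\ge 0$ such that there exists an integer $\beta\ge 1$ with $D^{\alpha+\beta}(\mathbf{u})=D^{\alpha}(\mathbf{u})$, and $Per(\mathbf{u})$ is the smallest integer $\beta\geq 1$ such that $D^{Len(\mathbf{u})+\beta}(\mathbf{u})=D^{Len(\mathbf{u})}(\mathbf{u})$. Define $L_m(n)=Len(0,0,\dots,0,1)$ and $P_m(n)=Per(0,0,\dots,0,1)$, where $(0,\dots,0,1)\in\mathbb{Z}_m^n$. *)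

From mathcomp Require Import all_boot all_algebra.
Set Implicit Arguments. Unset Strict Implicit. Unset Printing Implicit Defensive.

(* Elements of Z_m^n are represented as finite functions 'I_n -> 'Z_m
   (with 'Z_m the ring Z/mZ; the theorem only uses m >= 2). *)
Definition ducci (m n : nat) (x : {ffun 'I_n -> 'Z_m}) : {ffun 'I_n -> 'Z_m} :=
  [ffun i : 'I_n => (x i + x (ordS i))%R].

Definition ducci_iter (m n j : nat) (u : {ffun 'I_n -> 'Z_m}) := iter j (@ducci m n) u.

Definition periodic_from (m n : nat) (u : {ffun 'I_n -> 'Z_m}) (a b : nat) : Prop :=
  ducci_iter (a + b) u = ducci_iter a u.

Definition IsLen (m n : nat) (u : {ffun 'I_n -> 'Z_m}) (a : nat) : Prop :=
  (exists b, 1 <= b /\ periodic_from u a b) /\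
  (forall a', (exists b, 1 <= b /\ periodic_from u a' b) -> a <= a').

Definition IsPer (m n : nat) (u : {ffun 'I_n -> 'Z_m}) (b : nat) : Prop :=
  exists a, IsLen u a /\ 1 <= b /\ periodic_from u a b /\
    (forall b', 1 <= b' -> periodic_from u a b' -> b <= b').

Definition e_last (m n : nat) : {ffun 'I_n -> 'Z_m} :=
  [ffun i : 'I_n => if (i : nat) == n.-1 then 1%R else 0%R].

(* Identify Z_m^n with the ring Z_m[x]/(x^n - 1), the vector u corresponding to
   the class of sum_i u_i x^(n-1-i).  Then D is multiplication by 1 + x and
   (0,...,0,1) is 1, so D^j(0,...,0,1) = (1 + x)^j.

   Let n = 2h with h = 2^(k-1).  Modulo 2, (1 + x)^h = 1 + x^h =: B, say
   (1 + x)^h = B + 2A, and B^2 = 2B because x^(2h) = 1.  Expanding binomially,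
   (B + 2A)^l = 2^l A^l + 2^(l-1) B ((1 + A)^l - A^l), and 2^l = 0, hence
   (1 + x)^((l+1)h - 1) = E ((1 + A)^l - A^l) with E = 2^(l-1) (1 + x)^(h-1) B.
   Now E is killed by 2 and by 1 + x, while A^2 = A modulo (2, 1 + x), so the
   last factor acts on E as 1: (1 + x)^((l+1)h - 1) = E, whose constant
   coefficient is 2^(l-1) != 0, and (1 + x)^((l+1)h) = E (1 + x) = 0.  An orbit
   that first reaches the fixed point 0 at step L has length L and period 1. *)

From mathcomp Require Import all_boot all_algebra.
From mathcomp Require Import ring zify.
Set Implicit Arguments. Unset Strict Implicit. Unset Printing Implicit Defensive.
Import GRing.Theory Pdiv.Ring Pdiv.RingMonic.
Local Open Scope ring_scope.

Lemma expr1D_2pow_mod2 (R : comNzRingType) (x : R) s : exists2 A : R,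
  (1 + x) ^+ (2 ^ s) = 1 + x ^+ (2 ^ s) + 2 * A &
  (* A^2 = A modulo the ideal (2, 1 + x), stated through its annihilators *)
  forall E : R, 2 * E = 0 -> E * (1 + x) = 0 -> E * A ^+ 2 = E * A.
Proof.
elim: s => [|s [A IH _]].
  by exists 0 => [|E _ _]; rewrite ?expr0n mulr0 ?addr0.
set t := x ^+ (2 ^ s); set c := A * (1 + t) + A ^+ 2.
exists (t + 2 * c) => [|E E2 Ey].
  by rewrite /c /t expnS mul2n -addnn !exprD IH; ring.
have Ex : E * x = E.
  have -> : E * x = E * (1 + x) - 2 * E + E by ring.
  by rewrite Ey E2 subr0 add0r.
have Et : E * t = E.
  by rewrite /t; elim: (2 ^ s)%N => [|j IHj]; rewrite ?mulr1 // exprS mulrA Ex.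
have EA : E * (t + 2 * c) = E.
  by rewrite mulrDr Et mulrA [E * 2]mulrC E2 mul0r addr0.
by rewrite expr2 mulrA !EA.
Qed.

Lemma exprS_2idemD (R : comNzRingType) (B A : R) j : B ^+ 2 = 2 * B ->
  (B + 2 * A) ^+ j.+1 =
    2 ^+ j.+1 * A ^+ j.+1 + 2 ^+ j * B * ((1 + A) ^+ j.+1 - A ^+ j.+1).
Proof.
move=> BB; elim: j => [|j IH]; first by ring.
rewrite exprS IH !(exprS _ j.+1) (exprS 2 j).
ring: BB.
Qed.

Lemma mulr_idem_exprS (R : comNzRingType) (E a : R) j :
  E * a ^+ 2 = E * a -> E * a ^+ j.+1 = E * a.
Proof.
move=> Ea; elim: j => [|j IH]; first by rewrite expr1.
by rewrite exprS mulrCA IH mulrCA -expr2 Ea.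
Qed.

Section OnePlusXNilpotent.
Variables (R : comNzRingType) (x : R) (s l : nat).
Local Notation h := (2 ^ s)%N.
Hypotheses (sqr_xh : (x ^+ h) ^+ 2 = 1) (l_gt0 : (0 < l)%N)
           (two_nil : 2 ^+ l = 0 :> R).

Let B := 1 + x ^+ h.
Let E := 2 ^+ l.-1 * ((1 + x) ^+ h.-1 * B).

Let sqr_B : B ^+ 2 = 2 * B.
Proof. by rewrite /B; ring: sqr_xh. Qed.

Let expr1Dx_h : (1 + x) ^+ h = (1 + x) ^+ h.-1 * (1 + x).
Proof. by rewrite -exprSr prednK ?expn_gt0. Qed.

Let mul2E : 2 * E = 0.
Proof. by rewrite /E mulrA -exprS prednK // two_nil mul0r. Qed.

Let mulE_1Dx : E * (1 + x) = 0.
Proof.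
have [A yh _] := expr1D_2pow_mod2 x s.
rewrite /E -mulrA mulrAC -expr1Dx_h yh -/B.
have -> : (B + 2 * A) * B = 2 * (B * (1 + A)) by ring: sqr_B.
by rewrite mulrA -exprSr prednK // two_nil mul0r.
Qed.

Lemma expr1Dx_last : (1 + x) ^+ (h.-1 + l * h) = E.
Proof.
have [A yh idemA] := expr1D_2pow_mod2 x s.
have EA := idemA E mul2E mulE_1Dx.
have E1A : E * (1 + A) ^+ 2 = E * (1 + A).
  have -> : E * (1 + A) ^+ 2 = E * (1 + A) + 2 * E * A + (E * A ^+ 2 - E * A).
    by ring.
  by rewrite EA mul2E mul0r subrr !addr0.
rewrite exprD mulnC exprM yh -/B -(prednK l_gt0) exprS_2idemD // prednK //.
rewrite two_nil mul0r add0r.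
have -> : (1 + x) ^+ h.-1 * (2 ^+ l.-1 * B * ((1 + A) ^+ l - A ^+ l)) =
  E * ((1 + A) ^+ l - A ^+ l) by rewrite /E; ring.
rewrite mulrBr -(prednK l_gt0) (mulr_idem_exprS _ E1A) (mulr_idem_exprS _ EA).
by rewrite mulrDr mulr1 addrK.
Qed.

Lemma expr1Dx_nil : (1 + x) ^+ (l.+1 * h) = 0.
Proof.
by rewrite mulSn -{1}(prednK (expn_gt0 2 s)) addSn exprSr expr1Dx_last mulE_1Dx.
Qed.
End OnePlusXNilpotent.

Section CyclicQuotient.
Variables (R : comNzRingType) (n : nat).
Hypothesis n_gt0 : (0 < n)%N.
Local Notation d := ('X^n - 1 : {poly R}).
Local Notation Q := {poly %/ d}.

Lemma mk_monic_Xn_sub1 : mk_monic d = d.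
Proof. by rewrite /mk_monic size_Xn_sub_1 // ltnS n_gt0 monic_Xn_sub_1. Qed.

Lemma size_mk_monic_Xn_sub1 : size (mk_monic d) = n.+1.
Proof. by rewrite mk_monic_Xn_sub1 size_Xn_sub_1. Qed.

Lemma size_qpoly (q : Q) : (size q <= n)%N.
Proof. by rewrite -ltnS -size_mk_monic_Xn_sub1 size_mk_monic. Qed.

Lemma in_qpoly_Xn_sub1_small (p : {poly R}) :
  (size p <= n)%N -> in_qpoly d p = p :> {poly R}.
Proof. by move=> sp; rewrite in_qpoly_small // size_mk_monic_Xn_sub1. Qed.

Lemma qpolyX_expn : 'qX ^+ n = 1 :> Q.
Proof.
apply: val_inj; rewrite -rmorphXn /= mk_monic_Xn_sub1.
have -> : rmodp 'X^n d = rmodp (1 * d + 1) d by rewrite mul1r subrK.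
by rewrite rmodp_addl_mul_small ?monic_Xn_sub_1 ?polyC1 // size_poly1 size_Xn_sub_1.
Qed.

Lemma coef_mul_qpolyX (q : Q) (i : 'I_n) : (q * 'qX)`_(ordS i) = q`_i.
Proof.
have dM := monic_Xn_sub_1 R n_gt0.
set c := q`_n.-1; set r := (q : {poly R}) * 'X - c%:P * d.
have coef_r j : r`_j = (if j == 0%N then c else q`_j.-1) - c * (j == n)%:R.
  rewrite coefB coefMX coefCM coefB coefXn coefC.
  case: j => [|j]; last by rewrite subr0.
  by rewrite eq_sym (gtn_eqF n_gt0) /= !(sub0r, mulrN, mulr1, opprK, mulr0, subr0).
have size_r : (size r <= n)%N.
  apply/leq_sizeP => j le_nj; rewrite coef_r (gtn_eqF (leq_trans n_gt0 le_nj)).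
  case: (ltngtP j n) le_nj => // [lt_nj|->] _; last by rewrite mulr1 subrr.
  by rewrite mulr0 subr0 nth_default // (leq_trans (size_qpoly q)) //; lia.
have -> : (q * 'qX : {poly R}) = r.
  rewrite /= rmodp_mulmr ?monic_mk_monic // [X in rmodp _ X]mk_monic_Xn_sub1.
  rewrite -[_ * 'X](subrK (c%:P * d)) addrC.
  by rewrite rmodp_addl_mul_small // size_Xn_sub_1.
rewrite coef_r (ltn_eqF (ltn_pmod _ n_gt0)) mulr0 subr0.
have := ltn_ord i; rewrite leq_eqVlt => /predU1P[i1n|i1n].
  have -> : ordS i = 0%N :> nat by rewrite /= i1n modnn.
  by rewrite /c (_ : n.-1 = i) //; lia.
by have -> : ordS i = i.+1 :> nat by rewrite /= modn_small.
Qed.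

Lemma coef0_qpoly_1DX j k : (0 < k)%N -> (j + k < n)%N ->
  ((1 + 'qX) ^+ j * (1 + 'qX ^+ k) : Q)`_0 = 1.
Proof.
move=> k_gt0 jk_lt_n.
have -> : (1 + 'qX) ^+ j * (1 + 'qX ^+ k) =
    in_qpoly d ((1 + 'X) ^+ j * (1 + 'X ^+ k)).
  by rewrite rmorphM rmorphXn !rmorphD rmorph1 rmorphXn.
rewrite in_qpoly_Xn_sub1_small; last first.
  apply: leq_trans (size_polyMleq _ _) _.
  have := size_poly_exp_leq (1 + 'X : {poly R}) j.
  rewrite addrC [1 + _]addrC -polyC1 size_XaddC size_XnaddC //= add0n mul1n.
  set s := size _; lia.
by rewrite coef0M -!horner_coef0 !hornerE expr0n (gtn_eqF k_gt0) addr0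
  expr1n mulr1.
Qed.
End CyclicQuotient.

Lemma rev_ordS n (i : 'I_n) : rev_ord (ordS i) = ord_pred (rev_ord i).
Proof.
apply/val_inj => /=; have := ltn_ord i; rewrite leq_eqVlt => /predU1P[i1n|i1n].
  by rewrite i1n modnn subnn add0n modn_small //; lia.
have -> : ((n - i.+1 + n).-1 = n - i.+2 + n)%N by lia.
by rewrite modnDr !modn_small //; lia.
Qed.

Section DucciAsMultiplication.
Variables (m n : nat).
Hypothesis n_gt0 : (0 < n)%N.
Local Notation Q := {poly %/ ('X^n - 1 : {poly 'Z_m})}.

Definition vec_of_qpoly (q : Q) : {ffun 'I_n -> 'Z_m} := [ffun i => q`_(rev_ord i)].

Lemma ducci_vec_of_qpoly (q : Q) :
  ducci (vec_of_qpoly q) = vec_of_qpoly (q * (1 + 'qX)).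
Proof.
apply/ffunP => i; rewrite !ffunE mulrDr mulr1 coefD; congr (_ + _).
by rewrite rev_ordS -(coef_mul_qpolyX n_gt0) ord_predK.
Qed.

Lemma vec_of_qpoly1 : vec_of_qpoly 1 = e_last m n.
Proof.
apply/ffunP => i; rewrite !ffunE qpolyCE coefC.
by congr (if _ then _ else _); apply/eqP/eqP => /=; have := ltn_ord i; lia.
Qed.

Lemma ducci_iter_e_last j :
  ducci_iter j (e_last m n) = vec_of_qpoly ((1 + 'qX) ^+ j).
Proof.
elim: j => [|j IH]; first by rewrite expr0 vec_of_qpoly1.
by rewrite /ducci_iter iterS -/(ducci_iter j _) IH ducci_vec_of_qpoly exprSr.
Qed.

End DucciAsMultiplication.

Lemma Zp_2pow_neq0 l j : (j < l)%N -> ((2 ^ j)%:R : 'Z_(2 ^ l)) != 0.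
Proof.
move=> lt_jl; have l_gt1 : (1 < 2 ^ l)%N.
  by rewrite -{1}(expn0 2) ltn_exp2l // (leq_ltn_trans _ lt_jl).
by rewrite -val_eqE /= val_Zp_nat // modn_small ?ltn_exp2l // expn_eq0.
Qed.

Lemma ducci0 m n : ducci 0 = 0 :> {ffun 'I_n -> 'Z_m}.
Proof. by apply/ffunP => i; rewrite !ffunE addr0. Qed.

Lemma iter_ducci0 m n j : iter j (@ducci m n) 0 = 0.
Proof. by elim: j => //= j ->; rewrite ducci0. Qed.

Lemma periodic_from_iter m n (u : {ffun 'I_n -> 'Z_m}) a b t :
  periodic_from u a b -> ducci_iter (t * b + a) u = ducci_iter a u.
Proof.
move=> per; elim: t => [|t IH]; first by rewrite mul0n.
rewrite mulSnr -addnA [(b + a)%N]addnC /ducci_iter iterD -/(ducci_iter (a + b) u).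
by rewrite per -iterD.
Qed.

Section FirstZero.
Variables (m n : nat) (u : {ffun 'I_n -> 'Z_m}) (L : nat).
Hypotheses (uL1 : ducci_iter L.+1 u = 0) (uL : ducci_iter L u != 0).

Lemma periodic_from_first_zero : periodic_from u L.+1 1.
Proof.
by rewrite /periodic_from addn1 /ducci_iter iterS -/(ducci_iter L.+1 u) uL1 ducci0.
Qed.

Lemma IsLen_first_zero : IsLen u L.+1.
Proof.
split; first by exists 1%N; split; last exact: periodic_from_first_zero.
move=> a [b [b_gt0 per]]; rewrite ltnNge; apply: contra uL => le_aL.
have ua : ducci_iter a u = 0.
  rewrite -(periodic_from_iter L.+1 per) -(subnK (_ : L.+1 <= L.+1 * b + a)%N).
    by rewrite /ducci_iter iterD -/(ducci_iter L.+1 u) uL1 iter_ducci0.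
  by rewrite (leq_trans _ (leq_addr _ _)) // leq_pmulr.
by rewrite -(subnK le_aL) /ducci_iter iterD -/(ducci_iter a u) ua iter_ducci0.
Qed.

Lemma IsPer_first_zero : IsPer u 1.
Proof.
exists L.+1; split; first exact: IsLen_first_zero.
by split=> //; split=> [|b' b'_gt0 _]; first exact: periodic_from_first_zero.
Qed.
End FirstZero.

Local Close Scope ring_scope.

Theorem theorem1p2 (k l : nat) : 1 <= k -> 1 <= l ->
  IsLen (e_last (2 ^ l) (2 ^ k)) ((l + 1) * 2 ^ (k - 1)) /\
  IsPer (e_last (2 ^ l) (2 ^ k)) 1.
Proof.
move=> k_gt0 l_gt0; set h := 2 ^ (k - 1).
have n_gt0 : 0 < 2 ^ k by rewrite expn_gt0.
have h_gt0 : 0 < h by rewrite expn_gt0.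
have n_eq : 2 ^ k = h * 2 by rewrite -expnSr subn1 prednK.
pose x : {poly %/ ('X^(2 ^ k) - 1 : {poly 'Z_(2 ^ l)})} := 'qX%R.
have sqr_xh : ((x ^+ h) ^+ 2 = 1)%R by rewrite -exprM -n_eq qpolyX_expn.
have two_nil : (2 ^+ l = 0 :> {poly %/ ('X^(2 ^ k) - 1 : {poly 'Z_(2 ^ l)})})%R.
  by rewrite -natrX -(rmorph_nat (qpolyC _)) pchar_Zp ?rmorph0 // -{1}(expn0 2) ltn_exp2l.
have -> : (l + 1) * h = (h.-1 + l * h).+1 by rewrite -addSn prednK // addn1 mulSn.
set e := e_last _ _.
have uL1 : ducci_iter (h.-1 + l * h).+1 e = 0%R.
  rewrite ducci_iter_e_last // -addSn (prednK h_gt0) -mulSn.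
  rewrite (expr1Dx_nil sqr_xh l_gt0 two_nil).
  by apply/ffunP => i; rewrite !ffunE coef0.
have uL : ducci_iter (h.-1 + l * h) e != 0%R.
  rewrite ducci_iter_e_last // (expr1Dx_last sqr_xh l_gt0 two_nil).
  apply/negP => /eqP/ffunP/(_ (rev_ord (Ordinal n_gt0))); rewrite !ffunE rev_ordK.
  rewrite -natrX mulr_natl raddfMn coefMn coef0_qpoly_1DX //; last by lia.
  by apply/eqP; rewrite Zp_2pow_neq0 // ltn_predL.
by split; [exact: IsLen_first_zero uL1 uL | exact: IsPer_first_zero uL1 uL].
Qed.
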